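(* For every complex $s$ with $\Re(s)>2$, \[\sum_{k=1}^\infty (-1)^{k-1}k\,\zeta(s,k)=2^{-s}\Big\{\zeta\big(s-1,\tfrac12\big)+\tfrac12 \zeta\big(s,\tfrac12\big)-\zeta(s-1)\Big\}.\]
   Context: $\zeta(s,\alpha)=\sum_{n=0}^\infty (n+\alpha)^{-s}$ denotes the Hurwitz zeta function ($\Re(s)>1$, $\alpha>0$), and $\zeta(s)=\zeta(s,1)$ is the Riemann zeta function. *)

From Stdlib Require Import Reals.
From Coquelicot Require Import Coquelicot.
Open Scope R_scope.

Definition cexp (z : C) : C :=
  (exp (Re z) * cos (Im z), exp (Re z) * sin (Im z)).

Definition Rcpow (x : R) (w : C) : C := cexp (Cmult w (RtoC (ln x))).

(* Hurwitz zeta: zeta(s,a) = sum_{n>=0} (n+a)^(-s), for Re s > 1, a > 0.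
   The complex series is summed componentwise (real and imaginary parts);
   for Re s > 1 it converges absolutely, so this is the usual sum. *)
Definition hurwitz_zeta (s : C) (a : R) : C :=
  (Series (fun n => Re (Rcpow (INR n + a) (Copp s))),
   Series (fun n => Im (Rcpow (INR n + a) (Copp s)))).

Definition riemann_zeta (s : C) : C := hurwitz_zeta s 1.

(* Write q_m = (m+1)^(-s), so that zeta(s,n+1) = sum_{j>=n} q_j, and let
   c_m = sum_{n<=m} (-1)^n (n+1) be the partial sums of the weights; explicitly
   c_(2k) = k+1 and c_(2k+1) = -(k+1).  Summation by parts gives
     sum_{n<=N} (-1)^n (n+1) zeta(s,n+1) = sum_{m<=N} c_m q_m + c_N zeta(s,N+2).
   Since |c_m q_m| <= (m+1)^(1-Re s), the series sum c_m q_m converges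
   absolutely, and the boundary term is bounded by a tail of the convergent
   series sum (m+1)^(1-Re s), hence tends to 0.  Grouping sum c_m q_m in pairs
   m = 2k, 2k+1 and using 2k+1 = 2(k+1/2), 2k+2 = 2(k+1) and
   (k+1)(k+1/2)^(-s) = (k+1/2)^(1-s) + (1/2)(k+1/2)^(-s) turns it into
   2^(-s) { zeta(s-1,1/2) + (1/2) zeta(s,1/2) - zeta(s-1) }. *)

From Stdlib Require Import Reals Lra Lia.
From Coquelicot Require Import Coquelicot.
Open Scope R_scope.

Lemma cexp_plus (a b : C) : cexp (Cplus a b) = Cmult (cexp a) (cexp b).
Proof.
  destruct a as [a1 a2], b as [b1 b2]; unfold cexp, Cmult; simpl.
  rewrite exp_plus, cos_plus, sin_plus; f_equal; ring.
Qed.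

Lemma Rcpow_plus (x : R) (w1 w2 : C) :
  Rcpow x (Cplus w1 w2) = Cmult (Rcpow x w1) (Rcpow x w2).
Proof. unfold Rcpow; rewrite <- cexp_plus; f_equal; ring. Qed.

Lemma Rcpow_mult_distr (x y : R) (w : C) : 0 < x -> 0 < y ->
  Rcpow (x * y) w = Cmult (Rcpow x w) (Rcpow y w).
Proof.
  intros hx hy; unfold Rcpow; rewrite <- cexp_plus, ln_mult by assumption.
  f_equal; rewrite RtoC_plus; ring.
Qed.

Lemma Rcpow_shift (x : R) (s : C) : 0 < x ->
  Rcpow x (Copp (Cminus s (RtoC 1))) = Cmult (RtoC x) (Rcpow x (Copp s)).
Proof.
  intros hx.
  replace (Copp (Cminus s (RtoC 1))) with (Cplus (RtoC 1) (Copp s)) by ring.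
  rewrite Rcpow_plus; f_equal.
  unfold Rcpow, cexp, RtoC, Cmult; simpl.
  rewrite !Rmult_0_l, !Rmult_0_r, Rminus_0_r, Rplus_0_r, Rmult_1_l.
  rewrite exp_ln, cos_0, sin_0 by assumption; f_equal; ring.
Qed.

Lemma Cmod_Rcpow (x : R) (w : C) : Cmod (Rcpow x w) = Rpower x (Re w).
Proof.
  destruct w as [u v]; unfold Rcpow, cexp, Cmod, Rpower; simpl.
  rewrite !Rmult_0_r, Rminus_0_r, Rplus_0_l.
  set (e := exp (u * ln x)); set (t := v * ln x).
  replace (e * cos t * (e * cos t * 1) + e * sin t * (e * sin t * 1))
    with (Rsqr e * (Rsqr (sin t) + Rsqr (cos t))) by (unfold Rsqr; ring).
  rewrite sin2_cos2, Rmult_1_r, sqrt_Rsqr; [reflexivity | left; apply exp_pos].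
Qed.

(* Telescoping comparison behind the integral test:
   (p-1) x^(-p) <= (x-1)^(1-p) - x^(1-p) for p > 1 and x > 1. *)
Lemma Rpower_telescope (p x : R) : 1 < p -> 1 < x ->
  (p - 1) * Rpower x (- p) <= Rpower (x - 1) (1 - p) - Rpower x (1 - p).
Proof.
  intros hp hx; unfold Rpower.
  set (u := ln x - ln (x - 1)).
  (* ln x - ln (x-1) >= 1/x, from exp y >= 1 + y at y = ln ((x-1)/x) *)
  assert (hu : / x <= u).
  { pose proof (exp_ineq1_le (ln ((x - 1) / x))) as h.
    rewrite exp_ln, ln_div in h by (try apply Rdiv_lt_0_compat; lra).
    replace ((x - 1) / x) with (1 - / x) in h by (field; lra).
    unfold u; lra. }
  replace ((1 - p) * ln (x - 1)) with ((1 - p) * ln x + (p - 1) * u) by (unfold u; ring).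
  replace (- p * ln x) with ((1 - p) * ln x + - ln x) by ring.
  rewrite !exp_plus, exp_Ropp, exp_ln by lra.
  pose proof (exp_ineq1_le ((p - 1) * u)).
  pose proof (exp_pos ((1 - p) * ln x)).
  assert (0 < / x) by (apply Rinv_0_lt_compat; lra).
  assert ((p - 1) * / x <= (p - 1) * u) by (apply Rmult_le_compat_l; lra).
  nra.
Qed.

Definition zeta_term (p : R) (n : nat) : R := Rpower (INR n + 1) (- p).

Lemma zeta_partial_bound (p : R) (N : nat) : 1 < p ->
  (p - 1) * sum_n (zeta_term p) N + Rpower (INR N + 1) (1 - p) <= p.
Proof.
  intros hp; induction N as [|N IH].
  - rewrite sum_O; unfold zeta_term; simpl.
    rewrite Rplus_0_l; unfold Rpower; rewrite ln_1, !Rmult_0_r, exp_0; lra.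
  - rewrite sum_Sn; change plus with Rplus.
    pose proof (Rpower_telescope p (INR (S N) + 1) hp) as h.
    rewrite S_INR in *; pose proof (pos_INR N).
    replace (INR N + 1 + 1 - 1) with (INR N + 1) in h by ring.
    unfold zeta_term at 2; rewrite S_INR.
    specialize (h ltac:(lra)).
    rewrite Rmult_plus_distr_l; lra.
Qed.

Lemma ex_series_zeta (p : R) : 1 < p -> ex_series (zeta_term p).
Proof.
  intros hp.
  assert (bounded_increasing : ex_finite_lim_seq (sum_n (zeta_term p))).
  { apply ex_finite_lim_seq_incr with (p / (p - 1)).
    - intros n; rewrite sum_Sn; change plus with Rplus.
      assert (0 < zeta_term p (S n)) by apply exp_pos; lra.
    - intros n; pose proof (zeta_partial_bound p n hp).
      pose proof (exp_pos ((1 - p) * ln (INR n + 1))); unfold Rpower in *.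
      apply Rmult_le_reg_l with (p - 1); [lra|].
      replace ((p - 1) * (p / (p - 1))) with p by (field; lra); lra. }
  destruct bounded_increasing as [l hl]; exists l; exact hl.
Qed.

Lemma is_lim_seq_series_tail (r : nat -> R) : ex_series r ->
  is_lim_seq (fun N => Series (fun k => r (S N + k)%nat)) 0.
Proof.
  intros hr.
  apply is_lim_seq_ext with (fun N => Series r - sum_n r N).
  { intros N; rewrite (Series_incr_n r (S N)) by (lia || exact hr).
    rewrite sum_n_Reals; simpl pred; ring. }
  replace (Finite 0) with (Rbar_minus (Series r) (Series r)) by (simpl; f_equal; ring).
  apply is_lim_seq_minus'; [apply is_lim_seq_const|].
  exact (Series_correct _ hr).
Qed.

Lemma Rpower_scale_le (c x p : R) : 0 < x -> c <= x ->
  c * Rpower x (- p) <= Rpower x (- (p - 1)).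
Proof.
  intros hx hc.
  replace (- (p - 1)) with (1 + - p) by ring.
  rewrite Rpower_plus, Rpower_1 by exact hx.
  apply Rmult_le_compat_r; [left; apply exp_pos | exact hc].
Qed.

Lemma norm_series_le {K : AbsRing} {V : NormedModule K}
    (f : nat -> V) (b : nat -> R) (l : V) (L : R) :
  (forall n, norm (f n) <= b n) -> is_series f l -> is_series b L -> norm l <= L.
Proof.
  intros hb hf hL.
  assert (partial : forall N, norm (sum_n f N) <= sum_n b N).
  { induction N as [|N IH].
    - rewrite !sum_O; apply hb.
    - rewrite !sum_Sn; eapply Rle_trans; [apply norm_triangle|].
      change plus with Rplus; pose proof (hb (S N)); lra. }
  change (Rbar_le (norm l) L).
  apply (is_lim_seq_le (fun N => norm (sum_n f N)) (sum_n b)); [exact partial| |exact hL].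
  exact (filterlim_comp _ _ _ _ norm _ _ _ hf (filterlim_norm l)).
Qed.

Lemma is_series_components (f : nat -> C) (l : C) : is_series f l ->
  is_series (fun n => Re (f n)) (Re l) /\ is_series (fun n => Im (f n)) (Im l).
Proof.
  intros hf.
  assert (sum_re_im : forall N, sum_n f N =
            (sum_n (fun n => Re (f n)) N, sum_n (fun n => Im (f n)) N)).
  { induction N as [|N IH].
    - rewrite !sum_O; apply surjective_pairing.
    - rewrite !sum_Sn, IH; reflexivity. }
  unfold is_series in *; split.
  - apply filterlim_ext with (fun N => Re (sum_n f N)); [intros N; rewrite sum_re_im; reflexivity|].
    eapply filterlim_comp; [exact hf|].
    apply filterlim_locally; intros eps; exists eps; intros z [hre _]; exact hre.
  - apply filterlim_ext with (fun N => Im (sum_n f N)); [intros N; rewrite sum_re_im; reflexivity|].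
    eapply filterlim_comp; [exact hf|].
    apply filterlim_locally; intros eps; exists eps; intros z [_ him]; exact him.
Qed.

(* Comparison of the Hurwitz terms with the zeta terms:
   (x+a)^(-p) <= (1 + 1/a)^p (x+1)^(-p), since x + 1 <= (1 + 1/a)(x + a). *)
Lemma hurwitz_term_le (p a x : R) : 0 <= p -> 0 < a -> 0 <= x ->
  Rpower (x + a) (- p) <= Rpower (1 + / a) p * Rpower (x + 1) (- p).
Proof.
  intros hp ha hx.
  assert (hinv : 0 < / a) by (apply Rinv_0_lt_compat, ha).
  assert (hle : x + 1 <= (1 + / a) * (x + a)).
  { rewrite Rmult_plus_distr_r, Rmult_1_l, Rmult_plus_distr_l, Rinv_l by lra.
    pose proof (Rmult_le_pos (/ a) x ltac:(lra) hx); lra. }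
  assert (hmono : Rpower (x + 1) p <= Rpower (1 + / a) p * Rpower (x + a) p).
  { rewrite Rpower_mult_distr by lra; apply Rle_Rpower_l; lra. }
  rewrite !Rpower_Ropp.
  pose proof (exp_pos (p * ln (x + a))); pose proof (exp_pos (p * ln (x + 1))).
  pose proof (exp_pos (p * ln (1 + / a))); unfold Rpower in *.
  apply Rle_trans with (exp (p * ln (1 + / a)) * / (exp (p * ln (1 + / a)) * exp (p * ln (x + a)))).
  - right; field; lra.
  - apply Rmult_le_compat_l; [lra|]; apply Rinv_le_contravar; lra.
Qed.

Lemma is_series_hurwitz (w : C) (a : R) : 1 < Re w -> 0 < a ->
  is_series (fun n => Rcpow (INR n + a) (Copp w)) (hurwitz_zeta w a).
Proof.
  intros hw ha.
  set (c := Rpower (1 + / a) (Re w)).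
  assert (dominated : forall n, norm (Rcpow (INR n + a) (Copp w)) <= c * zeta_term (Re w) n).
  { intros n; change norm with Cmod; rewrite Cmod_Rcpow; unfold c, zeta_term.
    change (Re (Copp w)) with (- Re w); apply hurwitz_term_le; [lra | exact ha | apply pos_INR]. }
  destruct (@ex_series_le C_AbsRing C_CompleteNormedModule _ _ dominated) as [l hl].
  { exact (ex_series_scal_l c _ (ex_series_zeta _ hw)). }
  destruct (is_series_components _ _ hl) as [hre him].
  unfold hurwitz_zeta; rewrite (is_series_unique _ _ hre), (is_series_unique _ _ him).
  destruct l; exact hl.
Qed.

Section SummationByParts.

Variables (a : nat -> R) (q Z : nat -> C).
Hypothesis tail_step : forall n, Z n = Cplus (q n) (Z (S n)).

Lemma summation_by_parts (N : nat) :
  @eq C (sum_n (fun n => Cmult (RtoC (a n)) (Z n)) N)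
    (Cplus (sum_n (fun m => Cmult (RtoC (sum_n a m)) (q m)) N)
          (Cmult (RtoC (sum_n a N)) (Z (S N)))).
Proof.
  induction N as [|N IH].
  - rewrite !sum_O; rewrite (tail_step 0) at 1; ring.
  - rewrite (sum_Sn a N), !sum_Sn, IH; change (@plus C_AbelianMonoid) with Cplus.
    change (@plus R_AbelianMonoid) with Rplus; rewrite RtoC_plus.
    rewrite (tail_step (S N)).
    generalize (Z (S N)) (Z (S (S N))) (q (S N)); intros; ring.
Qed.

Lemma is_series_by_parts (L : C) :
  is_series (fun m => Cmult (RtoC (sum_n a m)) (q m)) L ->
  filterlim (fun N => Cmult (RtoC (sum_n a N)) (Z (S N))) eventually (locally (RtoC 0)) ->
  is_series (fun n => Cmult (RtoC (a n)) (Z n)) L.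
Proof.
  intros hmain hboundary; unfold is_series.
  apply filterlim_ext with (fun N => plus (sum_n (fun m => Cmult (RtoC (sum_n a m)) (q m)) N)
                                         (Cmult (RtoC (sum_n a N)) (Z (S N)))).
  { intros N; symmetry; apply summation_by_parts. }
  pose proof (filterlim_comp_2 _ _ plus hmain hboundary (filterlim_plus L (RtoC 0))) as hsum.
  assert (hzero : @plus (NormedModule.AbelianMonoid C_AbsRing C_NormedModule) L (RtoC 0) = L)
    by (change (Cplus L (RtoC 0) = L); ring).
  rewrite hzero in hsum.
  exact hsum.
Qed.

End SummationByParts.

Lemma is_series_pairs {K : AbsRing} {V : NormedModule K} (f : nat -> V) (l : V) :
  is_series f l -> is_series (fun j => plus (f (2 * j)%nat) (f (2 * j + 1)%nat)) l.
Proof.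
  intros hf.
  assert (pair_sums : forall k, sum_n (fun j => plus (f (2 * j)%nat) (f (2 * j + 1)%nat)) k
                                = sum_n f (2 * k + 1)).
  { induction k as [|k IH].
    - rewrite sum_O; change (2 * 0 + 1)%nat with 1%nat; rewrite sum_Sn, sum_O; reflexivity.
    - rewrite sum_Sn, IH.
      replace (2 * S k + 1)%nat with (S (S (2 * k + 1))) by lia.
      replace (2 * S k)%nat with (S (2 * k + 1)) by lia.
      rewrite !sum_Sn, plus_assoc; reflexivity. }
  unfold is_series in *.
  apply filterlim_ext with (fun k => sum_n f (2 * k + 1)); [intros k; symmetry; apply pair_sums|].
  apply (filterlim_comp _ _ _ (fun k => (2 * k + 1)%nat) (sum_n f) _ eventually); [|exact hf].
  apply eventually_subseq; intros n; lia.
Qed.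

Definition alt_weight (n : nat) : R := (-1) ^ n * INR (S n).

Lemma alt_weight_partial (k : nat) :
  sum_n alt_weight (2 * k) = INR k + 1 :> R /\ sum_n alt_weight (2 * k + 1) = - (INR k + 1) :> R.
Proof.
  assert (odd_step : forall m, sum_n alt_weight (2 * m + 1)
                               = sum_n alt_weight (2 * m) - (2 * INR m + 2) :> R).
  { intros m; rewrite Nat.add_1_r, sum_Sn; change plus with Rplus.
    unfold alt_weight at 2; rewrite pow_1_odd, !S_INR, mult_INR.
    change (INR 2) with (1 + 1); ring. }
  induction k as [|k [IHeven IHodd]].
  - assert (base : sum_n alt_weight (2 * 0) = INR 0 + 1 :> R)
      by (rewrite sum_O; unfold alt_weight; simpl; ring).
    split; [exact base|]; rewrite odd_step, base; simpl; ring.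
  - assert (even : sum_n alt_weight (2 * S k) = INR (S k) + 1 :> R).
    { replace (2 * S k)%nat with (S (2 * k + 1)) by lia.
      rewrite sum_Sn, IHodd; change plus with Rplus; unfold alt_weight.
      replace (S (2 * k + 1)) with (2 * S k)%nat by lia.
      rewrite pow_1_even, S_INR, mult_INR, (S_INR k); change (INR 2) with (1 + 1); ring. }
    split; [exact even|].
    rewrite odd_step, even, S_INR; ring.
Qed.

Lemma alt_weight_partial_bound (m : nat) : Rabs (sum_n alt_weight m) <= INR m + 1.
Proof.
  destruct (Nat.Even_or_Odd m) as [[k ->] | [k ->]];
    destruct (alt_weight_partial k) as [heven hodd]; pose proof (pos_INR k).
  - rewrite heven, mult_INR, Rabs_right by lra; simpl; lra.
  - rewrite hodd, plus_INR, mult_INR, Rabs_left by lra; simpl; lra.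
Qed.

Definition zeta_summand (s : C) (m : nat) : C := Rcpow (INR m + 1) (Copp s).

Lemma norm_zeta_summand_scaled (s : C) (c : R) (m : nat) : Rabs c <= INR m + 1 ->
  Cmod (Cmult (RtoC c) (zeta_summand s m)) <= zeta_term (Re s - 1) m.
Proof.
  intros hc; pose proof (pos_INR m).
  rewrite Cmod_mult, Cmod_R; unfold zeta_summand; rewrite Cmod_Rcpow.
  apply Rpower_scale_le; lra.
Qed.

Lemma hurwitz_tail (s : C) (n : nat) : 1 < Re s ->
  is_series (fun j => zeta_summand s (j + n)) (hurwitz_zeta s (INR (S n))).
Proof.
  intros hs.
  apply (is_series_ext (fun j => Rcpow (INR j + INR (S n)) (Copp s))).
  - intros j; unfold zeta_summand; rewrite plus_INR, S_INR; f_equal; ring.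
  - apply is_series_hurwitz; [exact hs|].
    rewrite S_INR; pose proof (pos_INR n); lra.
Qed.

Lemma hurwitz_step (s : C) (n : nat) : 1 < Re s ->
  hurwitz_zeta s (INR (S n)) = Cplus (zeta_summand s n) (hurwitz_zeta s (INR (S (S n)))).
Proof.
  intros hs.
  set (a := fun j => zeta_summand s (j + n)).
  set (rest := hurwitz_zeta s (INR (S (S n)))).
  assert (hshift : is_series (fun j => a (S j)) (plus (Cplus (a 0%nat) rest) (opp (a 0%nat)))).
  { replace (plus (Cplus (a 0%nat) rest) (opp (a 0%nat))) with rest
      by (change (rest = Cplus (Cplus (a 0%nat) rest) (Copp (a 0%nat))); ring).
    apply (is_series_ext (fun j => zeta_summand s (j + S n))); [|exact (hurwitz_tail s (S n) hs)].
    intros j; unfold a; f_equal; lia. }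
  exact (filterlim_locally_unique _ _ _ (hurwitz_tail s n hs) (is_series_decr_1 a _ hshift)).
Qed.

(* The boundary term c_N zeta(s, N+2) of the summation by parts tends to 0: it is
   bounded by the tail sum_{j>N} (j+1)^(1-Re s) of a convergent series. *)
Lemma boundary_term_vanishes (s : C) : 2 < Re s ->
  filterlim (fun N => Cmult (RtoC (sum_n alt_weight N)) (hurwitz_zeta s (INR (S (S N)))))
    eventually (locally (RtoC 0)).
Proof.
  intros hs.
  set (r := zeta_term (Re s - 1)).
  assert (hr : ex_series r) by (apply ex_series_zeta; lra).
  assert (bound : forall N, Cmod (Cmult (RtoC (sum_n alt_weight N)) (hurwitz_zeta s (INR (S (S N)))))
                            <= Series (fun k => r (S N + k)%nat)).
  { intros N.
    apply (norm_series_le (fun j => Cmult (RtoC (sum_n alt_weight N)) (zeta_summand s (j + S N)))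
                          (fun j => r (S N + j)%nat)).
    - intros j; change norm with Cmod; rewrite (Nat.add_comm (S N) j).
      apply norm_zeta_summand_scaled.
      eapply Rle_trans; [apply alt_weight_partial_bound|].
      rewrite plus_INR, S_INR; pose proof (pos_INR j); lra.
    - apply (@is_series_scal C_AbsRing C_NormedModule (RtoC (sum_n alt_weight N))), hurwitz_tail; lra.
    - apply Series_correct, (ex_series_incr_n r (S N)), hr. }
  apply (@filterlim_norm_zero _ C_AbsRing C_NormedModule); [apply filter_filter|].
  apply (is_lim_seq_le_le (fun _ => 0) _ (fun N => Series (fun k => r (S N + k)%nat)) 0).
  - intros N; split; [apply norm_ge_0 | apply bound].
  - apply is_lim_seq_const.
  - apply is_lim_seq_series_tail, hr.
Qed.

(* The summed-by-parts series sum c_m q_m converges, by comparison with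
   sum (m+1)^(1-Re s). *)
Lemma ex_series_weighted_zeta (s : C) : 2 < Re s ->
  ex_series (fun m => Cmult (RtoC (sum_n alt_weight m)) (zeta_summand s m)).
Proof.
  intros hs.
  apply (@ex_series_le C_AbsRing C_CompleteNormedModule _ (zeta_term (Re s - 1))).
  - intros m; change norm with Cmod.
    apply norm_zeta_summand_scaled, alt_weight_partial_bound.
  - apply ex_series_zeta; lra.
Qed.

(* One pair of terms of sum c_m q_m, rewritten with 2k+1 = 2(k+1/2) and
   2k+2 = 2(k+1) as 2^(-s) times a term of the right-hand side. *)
Lemma paired_weighted_term (s : C) (k : nat) :
  Cplus (Cmult (RtoC (sum_n alt_weight (2 * k))) (zeta_summand s (2 * k)))
        (Cmult (RtoC (sum_n alt_weight (2 * k + 1))) (zeta_summand s (2 * k + 1)))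
  = Cmult (Rcpow 2 (Copp s))
      (Cplus (Cplus (Rcpow (INR k + 1 / 2) (Copp (Cminus s (RtoC 1))))
                    (Cmult (RtoC (1 / 2)) (Rcpow (INR k + 1 / 2) (Copp s))))
             (Copp (Rcpow (INR k + 1) (Copp (Cminus s (RtoC 1)))))).
Proof.
  pose proof (pos_INR k).
  destruct (alt_weight_partial k) as [heven hodd]; rewrite heven, hodd.
  unfold zeta_summand; rewrite !Rcpow_shift by lra.
  replace (INR (2 * k) + 1) with (2 * (INR k + 1 / 2))
    by (rewrite mult_INR; change (INR 2) with (1 + 1); field).
  replace (INR (2 * k + 1) + 1) with (2 * (INR k + 1))
    by (rewrite plus_INR, mult_INR; change (INR 2) with (1 + 1); change (INR 1) with 1; ring).
  rewrite !Rcpow_mult_distr by lra.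
  replace (INR k + 1 / 2) with ((INR k + 1) - 1 / 2) by field.
  rewrite RtoC_minus, RtoC_opp.
  generalize (Rcpow 2 (Copp s)) (Rcpow (INR k + 1 - 1 / 2) (Copp s))
             (Rcpow (INR k + 1) (Copp s)) (RtoC (INR k + 1)) (RtoC (1 / 2)).
  intros; ring.
Qed.

Lemma is_series_paired_weighted_zeta (s : C) : 2 < Re s ->
  is_series (fun k => Cplus (Cmult (RtoC (sum_n alt_weight (2 * k))) (zeta_summand s (2 * k)))
                            (Cmult (RtoC (sum_n alt_weight (2 * k + 1))) (zeta_summand s (2 * k + 1))))
    (Cmult (Rcpow 2 (Copp s))
       (Cminus
          (Cplus (hurwitz_zeta (Cminus s (RtoC 1)) (1 / 2))
                 (Cmult (RtoC (1 / 2)) (hurwitz_zeta s (1 / 2))))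
          (riemann_zeta (Cminus s (RtoC 1))))).
Proof.
  intros hs.
  assert (hs1 : 1 < Re (Cminus s (RtoC 1))) by (unfold Cminus, Cplus, Copp, RtoC, Re in *; simpl; lra).
  pose proof (is_series_hurwitz _ (1 / 2) hs1 ltac:(lra)) as h_shift_half.
  pose proof (is_series_hurwitz s (1 / 2) ltac:(lra) ltac:(lra)) as h_half.
  pose proof (is_series_hurwitz _ 1 hs1 ltac:(lra)) as h_shift_one.
  pose proof (@is_series_scal C_AbsRing C_NormedModule (RtoC (1 / 2)) _ _ h_half) as h_scaled.
  pose proof (is_series_minus _ _ _ _ (is_series_plus _ _ _ _ h_shift_half h_scaled) h_shift_one)
    as h_combined.
  apply (is_series_ext _ _ _ (fun k => eq_sym (paired_weighted_term s k))).
  exact (is_series_scal (Rcpow 2 (Copp s)) _ _ h_combined).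
Qed.

Theorem mainTheorem8 (s : C) (hs : 2 < Re s) :
  is_series
    (fun n : nat => Cmult (RtoC ((-1) ^ n * INR (S n))) (hurwitz_zeta s (INR (S n))))
    (Cmult (Rcpow 2 (Copp s))
       (Cminus
          (Cplus (hurwitz_zeta (Cminus s (RtoC 1)) (1 / 2))
                 (Cmult (RtoC (1 / 2)) (hurwitz_zeta s (1 / 2))))
          (riemann_zeta (Cminus s (RtoC 1))))).
Proof.
  destruct (ex_series_weighted_zeta s hs) as [L hL].
  rewrite <- (filterlim_locally_unique _ _ _ (is_series_pairs _ _ hL)
                (is_series_paired_weighted_zeta s hs)).
  apply (is_series_by_parts alt_weight (zeta_summand s) (fun n => hurwitz_zeta s (INR (S n)))).
  - intros n; apply hurwitz_step; lra.
  - exact hL.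
  - exact (boundary_term_vanishes s hs).
Qed.
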